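(* Let $M^2$ be a minimal surface in $\mathbb R^4$ and let $\{x,y,n_1,n_2\}$ be a positively oriented orthonormal frame field with $x,y$ tangent and $n_1,n_2$ normal to $M^2$. Then the invariant $\varkappa$ equals the curvature of the normal connection of $M^2$: $$\varkappa=g\big(R^\perp(x,y)n_2,\,n_1\big),$$ where $D$ is the normal connection of $M^2$ and $R^\perp(x,y)=D_xD_y-D_yD_x-D_{[x,y]}$.
   Context: $\mathbb R^4$ carries the standard metric $g=\langle\cdot,\cdot\rangle$ and flat connection $\nabla'$; everything is smooth and local. A regular surface is $M^2: z=z(u,v)$, $(u,v)\in\mathcal D\subset\mathbb R^2$, with $E=\langle z_u,z_u\rangle$, $F=\langle z_u,z_v\rangle$, $G=\langle z_v,z_v\rangle$, $W=\sqrt{EG-F^2}$, and second fundamental form $\sigma$ (normal part of $\nabla'$). Minimal means the mean curvature vector $H=\tfrac12(\sigma(x,x)+\sigma(y,y))$ ($x,y$ an orthonormal tangent basis) vanishes. For an orthonormal normal frame $\{e_1,e_2\}$ such that $(z_u,z_v,e_1,e_2)$ is positively oriented, write $\sigma(z_u,z_u)=c_{11}^1e_1+c_{11}^2e_2$, $\sigma(z_u,z_v)=c_{12}^1e_1+c_{12}^2e_2$, $\sigma(z_v,z_v)=c_{22}^1e_1+c_{22}^2e_2$, and set $\Delta_1=c_{11}^1c_{12}^2-c_{12}^1c_{11}^2$, $\Delta_2=c_{11}^1c_{22}^2-c_{22}^1c_{11}^2$, $\Delta_3=c_{12}^1c_{22}^2-c_{22}^1c_{12}^2$, $L=2\Delta_1/W$,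 $M=\Delta_2/W$, $N=2\Delta_3/W$. The invariants of $M^2$ are $k=\frac{LN-M^2}{EG-F^2}$ and $\varkappa=\frac{EN+GL-2FM}{2(EG-F^2)}$. The normal connection is $D_XV=(\nabla'_XV)^\perp$ for normal fields $V$. *)

From Stdlib Require Import Reals Lra ClassicalEpsilon List.
Import ListNotations.
Open Scope R_scope.

Record V4 := mkV4 { v1 : R; v2 : R; v3 : R; v4 : R }.

Definition vadd (a b : V4) : V4 :=
  mkV4 (v1 a + v1 b) (v2 a + v2 b) (v3 a + v3 b) (v4 a + v4 b).
Definition vsub (a b : V4) : V4 :=
  mkV4 (v1 a - v1 b) (v2 a - v2 b) (v3 a - v3 b) (v4 a - v4 b).
Definition vscal (k : R) (a : V4) : V4 :=
  mkV4 (k * v1 a) (k * v2 a) (k * v3 a) (k * v4 a).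
Definition vzero : V4 := mkV4 0 0 0 0.
Definition dot (a b : V4) : R :=
  v1 a * v1 b + v2 a * v2 b + v3 a * v3 b + v4 a * v4 b.

Definition det3 (a11 a12 a13 a21 a22 a23 a31 a32 a33 : R) : R :=
  a11 * (a22 * a33 - a23 * a32)
  - a12 * (a21 * a33 - a23 * a31)
  + a13 * (a21 * a32 - a22 * a31).

Definition det4 (a b c d : V4) : R :=
  v1 a * det3 (v2 b) (v2 c) (v2 d) (v3 b) (v3 c) (v3 d) (v4 b) (v4 c) (v4 d)
  - v1 b * det3 (v2 a) (v2 c) (v2 d) (v3 a) (v3 c) (v3 d) (v4 a) (v4 c) (v4 d)
  + v1 c * det3 (v2 a) (v2 b) (v2 d) (v3 a) (v3 b) (v3 d) (v4 a) (v4 b) (v4 d)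
  - v1 d * det3 (v2 a) (v2 b) (v2 c) (v3 a) (v3 b) (v3 c) (v4 a) (v4 b) (v4 c).

(** Partial derivatives of a scalar function of (u,v): the derivative
    value when it exists (it is then unique), an arbitrary value otherwise. *)
Definition Pu (f : R -> R -> R) : R -> R -> R :=
  fun u v => epsilon (inhabits 0) (fun l => derivable_pt_lim (fun t => f t v) u l).
Definition Pv (f : R -> R -> R) : R -> R -> R :=
  fun u v => epsilon (inhabits 0) (fun l => derivable_pt_lim (fun t => f u t) v l).

Fixpoint iterP (w : list bool) (f : R -> R -> R) : R -> R -> R :=
  match w with
  | nil => f
  | b :: w' => (if b then Pu else Pv) (iterP w' f)
  end.

Definition cont2_at (D : R -> R -> Prop) (f : R -> R -> R) (u v : R) : Prop :=
  forall eps, 0 < eps -> exists del, 0 < del /\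
    forall u' v', D u' v' -> Rabs (u' - u) < del -> Rabs (v' - v) < del ->
      Rabs (f u' v' - f u v) < eps.

Definition open2 (D : R -> R -> Prop) : Prop :=
  forall u v, D u v -> exists r, 0 < r /\
    forall u' v', Rabs (u' - u) < r -> Rabs (v' - v) < r -> D u' v'.

Definition smooth_on (D : R -> R -> Prop) (f : R -> R -> R) : Prop :=
  forall (w : list bool) u v, D u v ->
    (exists l, derivable_pt_lim (fun t => iterP w f t v) u l) /\
    (exists l, derivable_pt_lim (fun t => iterP w f u t) v l) /\
    cont2_at D (iterP w f) u v.

Definition field := R -> R -> V4.

Definition smoothV (D : R -> R -> Prop) (X : field) : Prop :=
  smooth_on D (fun u v => v1 (X u v)) /\ smooth_on D (fun u v => v2 (X u v)) /\
  smooth_on D (fun u v => v3 (X u v)) /\ smooth_on D (fun u v => v4 (X u v)).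

Definition PuV (X : field) : field := fun u v =>
  mkV4 (Pu (fun a b => v1 (X a b)) u v) (Pu (fun a b => v2 (X a b)) u v)
       (Pu (fun a b => v3 (X a b)) u v) (Pu (fun a b => v4 (X a b)) u v).
Definition PvV (X : field) : field := fun u v =>
  mkV4 (Pv (fun a b => v1 (X a b)) u v) (Pv (fun a b => v2 (X a b)) u v)
       (Pv (fun a b => v3 (X a b)) u v) (Pv (fun a b => v4 (X a b)) u v).

Section Surface.
Variable z : field.

Definition zu : field := PuV z.
Definition zv : field := PvV z.
Definition zuu : field := PuV (PuV z).
Definition zuv : field := PvV (PuV z).
Definition zvv : field := PvV (PvV z).

Definition EE u v := dot (zu u v) (zu u v).
Definition FF u v := dot (zu u v) (zv u v).
Definition GG u v := dot (zv u v) (zv u v).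
Definition W2 u v := EE u v * GG u v - FF u v ^ 2.
Definition WW u v := sqrt (W2 u v).

(** Coefficients of the tangential part of a vector w at (u,v) in the basis
    z_u, z_v (solution of the Gram system); for tangent w, w = tc1 z_u + tc2 z_v. *)
Definition tc1 u v (w : V4) : R :=
  (GG u v * dot w (zu u v) - FF u v * dot w (zv u v)) / W2 u v.
Definition tc2 u v (w : V4) : R :=
  (EE u v * dot w (zv u v) - FF u v * dot w (zu u v)) / W2 u v.

Definition nrm u v (w : V4) : V4 :=
  vsub w (vadd (vscal (tc1 u v w) (zu u v)) (vscal (tc2 u v w) (zv u v))).

(** Second fundamental form at (u,v) on tangent vectors w1, w2:
    sigma(z_i,z_j) = (nabla'_{z_i} z_j)^perp = (z_ij)^perp, extended bilinearly. *)
Definition sigma u v (w1 w2 : V4) : V4 :=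
  let a1 := tc1 u v w1 in let b1 := tc2 u v w1 in
  let a2 := tc1 u v w2 in let b2 := tc2 u v w2 in
  nrm u v (vadd (vscal (a1 * a2) (zuu u v))
          (vadd (vscal (a1 * b2 + b1 * a2) (zuv u v))
                (vscal (b1 * b2) (zvv u v)))).

(** Minimality, computed with an orthonormal tangent basis x, y:
    H = 1/2 (sigma(x,x) + sigma(y,y)) = 0. *)
Definition minimal_wrt (D : R -> R -> Prop) (x y : field) : Prop :=
  forall u v, D u v ->
    vscal (1/2) (vadd (sigma u v (x u v) (x u v)) (sigma u v (y u v) (y u v))) = vzero.

Definition c11 u v (e : V4) := dot (sigma u v (zu u v) (zu u v)) e.
Definition c12 u v (e : V4) := dot (sigma u v (zu u v) (zv u v)) e.
Definition c22 u v (e : V4) := dot (sigma u v (zv u v) (zv u v)) e.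

Definition Delta1 u v e1 e2 := c11 u v e1 * c12 u v e2 - c12 u v e1 * c11 u v e2.
Definition Delta2 u v e1 e2 := c11 u v e1 * c22 u v e2 - c22 u v e1 * c11 u v e2.
Definition Delta3 u v e1 e2 := c12 u v e1 * c22 u v e2 - c22 u v e1 * c12 u v e2.

Definition LL u v e1 e2 := 2 * Delta1 u v e1 e2 / WW u v.
Definition MM u v e1 e2 := Delta2 u v e1 e2 / WW u v.
Definition NN u v e1 e2 := 2 * Delta3 u v e1 e2 / WW u v.

Definition kinv u v e1 e2 :=
  (LL u v e1 e2 * NN u v e1 e2 - MM u v e1 e2 ^ 2) / W2 u v.
Definition varkappa u v e1 e2 :=
  (EE u v * NN u v e1 e2 + GG u v * LL u v e1 e2 - 2 * FF u v * MM u v e1 e2)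
  / (2 * W2 u v).

Definition pos_normal_frame u v (e1 e2 : V4) : Prop :=
  dot e1 e1 = 1 /\ dot e2 e2 = 1 /\ dot e1 e2 = 0 /\
  dot e1 (zu u v) = 0 /\ dot e1 (zv u v) = 0 /\
  dot e2 (zu u v) = 0 /\ dot e2 (zv u v) = 0 /\
  0 < det4 (zu u v) (zv u v) e1 e2.

(** Tangent vector fields act as derivations; a tangent field X has
    coordinate coefficients aX = tc1 X, bX = tc2 X (X = aX z_u + bX z_v). *)
Definition coefA (X : field) : R -> R -> R := fun u v => tc1 u v (X u v).
Definition coefB (X : field) : R -> R -> R := fun u v => tc2 u v (X u v).

Definition derivF (X : field) (f : R -> R -> R) : R -> R -> R :=
  fun u v => coefA X u v * Pu f u v + coefB X u v * Pv f u v.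

Definition nabla' (X V : field) : field := fun u v =>
  vadd (vscal (coefA X u v) (PuV V u v)) (vscal (coefB X u v) (PvV V u v)).

Definition Dn (X V : field) : field := fun u v => nrm u v (nabla' X V u v).

Definition bracket (X Y : field) : field := fun u v =>
  vadd (vscal (derivF X (coefA Y) u v - derivF Y (coefA X) u v) (zu u v))
       (vscal (derivF X (coefB Y) u v - derivF Y (coefB X) u v) (zv u v)).

Definition Rperp (X Y V : field) : field := fun u v =>
  vsub (vsub (Dn X (Dn Y V) u v) (Dn Y (Dn X V) u v)) (Dn (bracket X Y) V u v).

Definition adapted_frame (D : R -> R -> Prop) (x y n1 n2 : field) : Prop :=
  forall u v, D u v ->
    dot (x u v) (x u v) = 1 /\ dot (y u v) (y u v) = 1 /\
    dot (n1 u v) (n1 u v) = 1 /\ dot (n2 u v) (n2 u v) = 1 /\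
    dot (x u v) (y u v) = 0 /\ dot (x u v) (n1 u v) = 0 /\
    dot (x u v) (n2 u v) = 0 /\ dot (y u v) (n1 u v) = 0 /\
    dot (y u v) (n2 u v) = 0 /\ dot (n1 u v) (n2 u v) = 0 /\
    (exists a b, x u v = vadd (vscal a (zu u v)) (vscal b (zv u v))) /\
    (exists a b, y u v = vadd (vscal a (zu u v)) (vscal b (zv u v))) /\
    dot (n1 u v) (zu u v) = 0 /\ dot (n1 u v) (zv u v) = 0 /\
    dot (n2 u v) (zu u v) = 0 /\ dot (n2 u v) (zv u v) = 0 /\
    0 < det4 (x u v) (y u v) (n1 u v) (n2 u v).

End Surface.

From Pilot Require Import Defs.
From Stdlib Require Import Reals Lra Psatz ClassicalEpsilon List.
Import ListNotations.
Open Scope R_scope.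

(** Fix a point (u,v) of the parameter domain and write
    aX, bX, aY, bY for the coordinates of x, y in the basis (z_u, z_v),
    h^k_ij = <n_k, z_ij> for the second fundamental form in the frame n1, n2,
    and omega(Y) = <D_Y n2, n1> = aY p + bY q for the normal connection form,
    where p = <(n2)_u, n1> and q = <(n2)_v, n1>.

    1. Since n2 has unit length, D_Y n2 = omega(Y) n1, hence
       <D_X D_Y n2, n1> = X(omega(Y)); Cartan's formula then gives
       <R^perp(x,y) n2, n1> = (aX bY - bX aY) (q_u - p_v).
    2. By symmetry of second derivatives (Schwarz-Clairaut, proved from the
       mean value theorem), q_u - p_v = <(n2)_v,(n1)_u> - <(n2)_u,(n1)_v>;
       Parseval's identity in the frame {x,y,n1,n2} and the Weingarten
       relations <(n_k)_i, z_j> = -<n_k, z_ij> turn this into a quadratic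
       expression in the h^k_ij.
    3. Any positively oriented normal frame (e1,e2) is a rotation or
       reflection of (n1,n2) with determinant rho = +-1, which multiplies the
       Deltas by rho; inverting the Gram system of x, y and comparing
       orientations (d W = rho, with d = aX bY - bX aY) identifies both sides. *)

(** Differentiability of a real function at a point, and its derivative
    chosen by [epsilon] exactly as in the definitions of [Pu] and [Pv]. *)
Definition exD (g : R -> R) (x : R) : Prop := exists l, derivable_pt_lim g x l.
Definition D1 (g : R -> R) (x : R) : R :=
  epsilon (inhabits 0) (fun l => derivable_pt_lim g x l).

Lemma D1_spec g x : exD g x -> derivable_pt_lim g x (D1 g x).
Proof. intros H. exact (epsilon_spec _ _ H). Qed.

Lemma D1_eq g x l : derivable_pt_lim g x l -> D1 g x = l.
Proof.
  intros H. apply (uniqueness_limite g x); [apply D1_spec; exists l|]; exact H.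
Qed.

Lemma ex_plus f g x : exD f x -> exD g x -> exD (fun t => f t + g t) x.
Proof. intros [l1 H1] [l2 H2]; eexists; apply derivable_pt_lim_plus; eauto. Qed.
Lemma ex_minus f g x : exD f x -> exD g x -> exD (fun t => f t - g t) x.
Proof. intros [l1 H1] [l2 H2]; eexists; apply derivable_pt_lim_minus; eauto. Qed.
Lemma ex_mult f g x : exD f x -> exD g x -> exD (fun t => f t * g t) x.
Proof. intros [l1 H1] [l2 H2]; eexists; apply derivable_pt_lim_mult; eauto. Qed.
Lemma ex_div f g x : exD f x -> exD g x -> g x <> 0 -> exD (fun t => f t / g t) x.
Proof. intros [l1 H1] [l2 H2] H; eexists; apply derivable_pt_lim_div; eauto. Qed.
Lemma ex_const c x : exD (fun _ => c) x.
Proof. exists 0. apply derivable_pt_lim_const. Qed.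
Lemma ex_pow2 f x : exD f x -> exD (fun t => f t ^ 2) x.
Proof.
  intros H. change (exD (fun t => f t * (f t * 1)) x).
  apply ex_mult; [|apply ex_mult]; auto using ex_const.
Qed.

Lemma D1_plus f g x : exD f x -> exD g x -> D1 (fun t => f t + g t) x = D1 f x + D1 g x.
Proof. intros; apply D1_eq, derivable_pt_lim_plus; apply D1_spec; auto. Qed.
Lemma D1_mult f g x : exD f x -> exD g x ->
  D1 (fun t => f t * g t) x = D1 f x * g x + f x * D1 g x.
Proof. intros; apply D1_eq, derivable_pt_lim_mult; apply D1_spec; auto. Qed.

Lemma derivable_pt_lim_local f g x l r : 0 < r ->
  (forall t, Rabs (t - x) < r -> f t = g t) ->
  derivable_pt_lim g x l -> derivable_pt_lim f x l.
Proof.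
  intros Hr Hfg Hg eps He. destruct (Hg eps He) as [del Hd].
  assert (Hm : 0 < Rmin del r) by (apply Rmin_pos; [apply cond_pos|lra]).
  exists (mkposreal _ Hm). intros h Hh Hh'. simpl in Hh'.
  assert (Hhd : Rabs h < del) by (apply Rlt_le_trans with (1 := Hh'); apply Rmin_l).
  assert (Hhr : Rabs h < r) by (apply Rlt_le_trans with (1 := Hh'); apply Rmin_r).
  rewrite (Hfg (x + h)), (Hfg x); auto.
  - replace (x - x) with 0 by ring. rewrite Rabs_R0; lra.
  - replace (x + h - x) with h by ring. exact Hhr.
Qed.

Lemma D1_local f g x r : 0 < r -> (forall t, Rabs (t - x) < r -> f t = g t) -> exD g x ->
  D1 f x = D1 g x.
Proof.
  intros Hr H Hg. apply D1_eq, (derivable_pt_lim_local f g x _ r Hr H), D1_spec, Hg.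
Qed.

(** Existence of the partial derivatives of [f] at [(u,v)]; note that
    [Pu f u v] is by definition [D1 (fun t => f t v) u], and similarly for [Pv]. *)
Definition exU (f : R -> R -> R) (u v : R) : Prop := exD (fun t => f t v) u.
Definition exV (f : R -> R -> R) (u v : R) : Prop := exD (fun t => f u t) v.

Lemma exU_plus f g u v : exU f u v -> exU g u v -> exU (fun a b => f a b + g a b) u v.
Proof. apply ex_plus. Qed.
Lemma exU_minus f g u v : exU f u v -> exU g u v -> exU (fun a b => f a b - g a b) u v.
Proof. apply ex_minus. Qed.
Lemma exU_mult f g u v : exU f u v -> exU g u v -> exU (fun a b => f a b * g a b) u v.
Proof. apply ex_mult. Qed.
Lemma exU_div f g u v : exU f u v -> exU g u v -> g u v <> 0 ->
  exU (fun a b => f a b / g a b) u v.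
Proof. intros; apply ex_div; assumption. Qed.
Lemma exU_pow2 f u v : exU f u v -> exU (fun a b => f a b ^ 2) u v.
Proof. apply ex_pow2. Qed.
Lemma exU_const c u v : exU (fun _ _ => c) u v.
Proof. exact (ex_const c u). Qed.
Lemma exV_const c u v : exV (fun _ _ => c) u v.
Proof. exact (ex_const c v). Qed.
Lemma exV_plus f g u v : exV f u v -> exV g u v -> exV (fun a b => f a b + g a b) u v.
Proof. apply ex_plus. Qed.
Lemma exV_minus f g u v : exV f u v -> exV g u v -> exV (fun a b => f a b - g a b) u v.
Proof. apply ex_minus. Qed.
Lemma exV_mult f g u v : exV f u v -> exV g u v -> exV (fun a b => f a b * g a b) u v.
Proof. apply ex_mult. Qed.
Lemma exV_div f g u v : exV f u v -> exV g u v -> g u v <> 0 ->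
  exV (fun a b => f a b / g a b) u v.
Proof. intros; apply ex_div; assumption. Qed.
Lemma exV_pow2 f u v : exV f u v -> exV (fun a b => f a b ^ 2) u v.
Proof. apply ex_pow2. Qed.

Lemma Pu_plus f g u v : exU f u v -> exU g u v ->
  Pu (fun a b => f a b + g a b) u v = Pu f u v + Pu g u v.
Proof. apply D1_plus. Qed.
Lemma Pv_plus f g u v : exV f u v -> exV g u v ->
  Pv (fun a b => f a b + g a b) u v = Pv f u v + Pv g u v.
Proof. apply D1_plus. Qed.
Lemma Pu_mult f g u v : exU f u v -> exU g u v ->
  Pu (fun a b => f a b * g a b) u v = Pu f u v * g u v + f u v * Pu g u v.
Proof. apply D1_mult. Qed.
Lemma Pv_mult f g u v : exV f u v -> exV g u v ->
  Pv (fun a b => f a b * g a b) u v = Pv f u v * g u v + f u v * Pv g u v.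
Proof. apply D1_mult. Qed.

Lemma Pu_mult_local f w g u v r : 0 < r ->
  (forall t, Rabs (t - u) < r -> f t v = w t v * g t v) -> exU w u v -> exU g u v ->
  Pu f u v = Pu w u v * g u v + w u v * Pu g u v.
Proof.
  intros Hr H Hw Hg.
  transitivity (D1 (fun t => w t v * g t v) u).
  { exact (D1_local (fun t => f t v) _ u r Hr H (ex_mult _ _ _ Hw Hg)). }
  exact (D1_mult (fun t => w t v) (fun t => g t v) u Hw Hg).
Qed.
Lemma Pv_mult_local f w g u v r : 0 < r ->
  (forall t, Rabs (t - v) < r -> f u t = w u t * g u t) -> exV w u v -> exV g u v ->
  Pv f u v = Pv w u v * g u v + w u v * Pv g u v.
Proof.
  intros Hr H Hw Hg.
  transitivity (D1 (fun t => w u t * g u t) v).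
  { exact (D1_local (fun t => f u t) _ v r Hr H (ex_mult _ _ _ Hw Hg)). }
  exact (D1_mult (fun t => w u t) (fun t => g u t) v Hw Hg).
Qed.

Lemma Pu_local_const f c u v r : 0 < r -> (forall t, Rabs (t - u) < r -> f t v = c) ->
  Pu f u v = 0.
Proof.
  intros Hr H. apply D1_eq, (derivable_pt_lim_local _ (fun _ => c) u 0 r Hr H).
  apply derivable_pt_lim_const.
Qed.
Lemma Pv_local_const f c u v r : 0 < r -> (forall t, Rabs (t - v) < r -> f u t = c) ->
  Pv f u v = 0.
Proof.
  intros Hr H. apply D1_eq, (derivable_pt_lim_local _ (fun _ => c) v 0 r Hr H).
  apply derivable_pt_lim_const.
Qed.

Lemma open2_lines D u v : open2 D -> D u v -> exists r, 0 < r /\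
  (forall t, Rabs (t - u) < r -> D t v) /\ (forall t, Rabs (t - v) < r -> D u t).
Proof.
  intros Ho H. destruct (Ho u v H) as (r & Hr & HD).
  assert (H0 : forall a, Rabs (a - a) < r) by (intros a; rewrite Rminus_diag, Rabs_R0; exact Hr).
  exists r; repeat split; auto.
Qed.

Definition exUV (A : field) (u v : R) : Prop :=
  exU (fun a b => v1 (A a b)) u v /\ exU (fun a b => v2 (A a b)) u v /\
  exU (fun a b => v3 (A a b)) u v /\ exU (fun a b => v4 (A a b)) u v.
Definition exVV (A : field) (u v : R) : Prop :=
  exV (fun a b => v1 (A a b)) u v /\ exV (fun a b => v2 (A a b)) u v /\
  exV (fun a b => v3 (A a b)) u v /\ exV (fun a b => v4 (A a b)) u v.

Lemma exU_dot A B u v : exUV A u v -> exUV B u v ->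
  exU (fun a b => dot (A a b) (B a b)) u v.
Proof.
  intros (a1 & a2 & a3 & a4) (b1 & b2 & b3 & b4). unfold dot.
  repeat apply exU_plus; apply exU_mult; assumption.
Qed.
Lemma exV_dot A B u v : exVV A u v -> exVV B u v ->
  exV (fun a b => dot (A a b) (B a b)) u v.
Proof.
  intros (a1 & a2 & a3 & a4) (b1 & b2 & b3 & b4). unfold dot.
  repeat apply exV_plus; apply exV_mult; assumption.
Qed.

Lemma Pu_dot A B u v : exUV A u v -> exUV B u v ->
  Pu (fun a b => dot (A a b) (B a b)) u v = dot (PuV A u v) (B u v) + dot (A u v) (PuV B u v).
Proof.
  intros (a1 & a2 & a3 & a4) (b1 & b2 & b3 & b4). unfold dot.
  rewrite !Pu_plus by (repeat apply exU_plus; apply exU_mult; assumption).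
  rewrite !Pu_mult by assumption. unfold PuV; simpl. ring.
Qed.
Lemma Pv_dot A B u v : exVV A u v -> exVV B u v ->
  Pv (fun a b => dot (A a b) (B a b)) u v = dot (PvV A u v) (B u v) + dot (A u v) (PvV B u v).
Proof.
  intros (a1 & a2 & a3 & a4) (b1 & b2 & b3 & b4). unfold dot.
  rewrite !Pv_plus by (repeat apply exV_plus; apply exV_mult; assumption).
  rewrite !Pv_mult by assumption. unfold PvV; simpl. ring.
Qed.

Lemma PuV_scal_local A w N u v r : 0 < r ->
  (forall t, Rabs (t - u) < r -> A t v = vscal (w t v) (N t v)) ->
  exU w u v -> exUV N u v ->
  PuV A u v = vadd (vscal (Pu w u v) (N u v)) (vscal (w u v) (PuV N u v)).
Proof.
  intros Hr H Hw (n1 & n2 & n3 & n4). unfold PuV, vadd, vscal; simpl.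
  f_equal; [apply (Pu_mult_local _ w (fun a b => v1 (N a b)) u v r) |
    apply (Pu_mult_local _ w (fun a b => v2 (N a b)) u v r) |
    apply (Pu_mult_local _ w (fun a b => v3 (N a b)) u v r) |
    apply (Pu_mult_local _ w (fun a b => v4 (N a b)) u v r)]; auto;
    intros t Ht; rewrite (H t Ht); reflexivity.
Qed.
Lemma PvV_scal_local A w N u v r : 0 < r ->
  (forall t, Rabs (t - v) < r -> A u t = vscal (w u t) (N u t)) ->
  exV w u v -> exVV N u v ->
  PvV A u v = vadd (vscal (Pv w u v) (N u v)) (vscal (w u v) (PvV N u v)).
Proof.
  intros Hr H Hw (n1 & n2 & n3 & n4). unfold PvV, vadd, vscal; simpl.
  f_equal; [apply (Pv_mult_local _ w (fun a b => v1 (N a b)) u v r) |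
    apply (Pv_mult_local _ w (fun a b => v2 (N a b)) u v r) |
    apply (Pv_mult_local _ w (fun a b => v3 (N a b)) u v r) |
    apply (Pv_mult_local _ w (fun a b => v4 (N a b)) u v r)]; auto;
    intros t Ht; rewrite (H t Ht); reflexivity.
Qed.

Lemma smooth_partials D f w u v : smooth_on D f -> D u v ->
  exU (iterP w f) u v /\ exV (iterP w f) u v.
Proof. intros H Huv. destruct (H w u v Huv) as (Hu & Hv & _). split; assumption. Qed.

Lemma smoothV_partials D X u v : smoothV D X -> D u v ->
  exUV X u v /\ exVV X u v /\ exUV (PuV X) u v /\ exVV (PuV X) u v /\
  exUV (PvV X) u v /\ exVV (PvV X) u v.
Proof.
  intros (s1 & s2 & s3 & s4) Huv.
  destruct (smooth_partials D _ [] u v s1 Huv), (smooth_partials D _ [] u v s2 Huv),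
    (smooth_partials D _ [] u v s3 Huv), (smooth_partials D _ [] u v s4 Huv),
    (smooth_partials D _ [true] u v s1 Huv), (smooth_partials D _ [true] u v s2 Huv),
    (smooth_partials D _ [true] u v s3 Huv), (smooth_partials D _ [true] u v s4 Huv),
    (smooth_partials D _ [false] u v s1 Huv), (smooth_partials D _ [false] u v s2 Huv),
    (smooth_partials D _ [false] u v s3 Huv), (smooth_partials D _ [false] u v s4 Huv).
  repeat split; assumption.
Qed.

Lemma dot_const_deriv D A B c u v : open2 D -> D u v ->
  (forall a b, D a b -> dot (A a b) (B a b) = c) ->
  exUV A u v -> exUV B u v -> exVV A u v -> exVV B u v ->
  dot (PuV A u v) (B u v) + dot (A u v) (PuV B u v) = 0 /\
  dot (PvV A u v) (B u v) + dot (A u v) (PvV B u v) = 0.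
Proof.
  intros Ho Huv Hc HAu HBu HAv HBv. destruct (open2_lines D u v Ho Huv) as (r & Hr & Lu & Lv).
  split.
  - rewrite <- Pu_dot by assumption. apply (Pu_local_const _ c u v r Hr); auto.
  - rewrite <- Pv_dot by assumption. apply (Pv_local_const _ c u v r Hr); auto.
Qed.

Lemma unit_field_deriv D n u v : open2 D -> smoothV D n -> D u v ->
  (forall a b, D a b -> dot (n a b) (n a b) = 1) ->
  dot (PuV n u v) (n u v) = 0 /\ dot (PvV n u v) (n u v) = 0.
Proof.
  intros Ho Hs Huv Hu. destruct (smoothV_partials D n u v Hs Huv) as (Hnu & Hnv & _).
  destruct (dot_const_deriv D n n 1 u v Ho Huv Hu Hnu Hnu Hnv Hnv) as [H1 H2].
  unfold dot in *. split; lra.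
Qed.

(** Symmetry of mixed partial derivatives. *)

(* Two applications of the mean value theorem: the second difference of [f]
   over a square of side [h] is [h^2] times a value of [Pv (Pu f)]. *)
Lemma mixed_difference f u v h : 0 < h ->
  (forall s t, u <= s <= u + h -> v <= t <= v + h -> exU f s t) ->
  (forall s t, u <= s <= u + h -> v <= t <= v + h -> exV (Pu f) s t) ->
  exists s t, u < s < u + h /\ v < t < v + h /\
    f (u + h) (v + h) - f (u + h) v - f u (v + h) + f u v = h * h * Pv (Pu f) s t.
Proof.
  intros Hh Hfu Hfuv.
  destruct (MVT_cor2 (fun s => f s (v + h) - f s v) (fun s => Pu f s (v + h) - Pu f s v)
              u (u + h)) as (s & Es & Hs); [lra| |].
  { intros c Hc. apply derivable_pt_lim_minus; apply D1_spec, Hfu; lra. }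
  destruct (MVT_cor2 (fun t => Pu f s t) (fun t => Pv (Pu f) s t) v (v + h))
    as (t & Et & Ht); [lra| |].
  { intros c Hc. apply D1_spec, Hfuv; lra. }
  exists s, t. split; [exact Hs|]. split; [exact Ht|].
  replace (u + h - u) with h in Es by ring. replace (v + h - v) with h in Et by ring.
  transitivity ((Pu f s (v + h) - Pu f s v) * h); [rewrite <- Es; ring | rewrite Et; ring].
Qed.

Lemma mixed_difference_transposed f u v h : 0 < h ->
  (forall s t, u <= s <= u + h -> v <= t <= v + h -> exV f s t) ->
  (forall s t, u <= s <= u + h -> v <= t <= v + h -> exU (Pv f) s t) ->
  exists s t, u < s < u + h /\ v < t < v + h /\
    f (u + h) (v + h) - f (u + h) v - f u (v + h) + f u v = h * h * Pu (Pv f) s t.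
Proof.
  intros Hh Hfv Hfvu.
  destruct (mixed_difference (fun a b => f b a) v u h Hh) as (t & s & Ht & Hs & E).
  - intros t s Ht Hs. exact (Hfv s t Hs Ht).
  - intros t s Ht Hs. exact (Hfvu s t Hs Ht).
  - exists s, t. split; [exact Hs|]. split; [exact Ht|]. change (Pu (Pv f) s t) with
      (Pv (Pu (fun a b => f b a)) t s). rewrite <- E. ring.
Qed.

Lemma eq_of_close a b : (forall eps, 0 < eps -> Rabs (a - b) < eps) -> a = b.
Proof.
  intros H. destruct (Req_dec a b) as [|Hne]; [assumption|].
  assert (Hp : 0 < Rabs (a - b)) by (apply Rabs_pos_lt; lra).
  specialize (H _ Hp). lra.
Qed.

(* Schwarz–Clairaut: by continuity of both mixed partials, the two mean
   values of the second difference converge to the same limit. *)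
Lemma clairaut D f u v : open2 D -> smooth_on D f -> D u v ->
  Pu (Pv f) u v = Pv (Pu f) u v.
Proof.
  intros Ho Hs Huv. apply eq_of_close. intros eps Heps.
  destruct (Hs [false; true] u v Huv) as (_ & _ & Cvu).
  destruct (Hs [true; false] u v Huv) as (_ & _ & Cuv).
  destruct (Cvu (eps / 2) ltac:(lra)) as (d1 & Hd1 & Close1).
  destruct (Cuv (eps / 2) ltac:(lra)) as (d2 & Hd2 & Close2).
  destruct (Ho u v Huv) as (r & Hr & HD). simpl in Close1, Close2.
  set (h := Rmin (Rmin d1 d2) r / 2).
  assert (Hm : 0 < Rmin (Rmin d1 d2) r) by (repeat apply Rmin_pos; assumption).
  pose proof (Rmin_l (Rmin d1 d2) r). pose proof (Rmin_r (Rmin d1 d2) r).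
  pose proof (Rmin_l d1 d2). pose proof (Rmin_r d1 d2).
  assert (Hh : 0 < h /\ h < d1 /\ h < d2 /\ h < r) by (unfold h; lra).
  destruct Hh as (Hh & Hhd1 & Hhd2 & Hhr).
  assert (Box : forall s t, u <= s <= u + h -> v <= t <= v + h -> D s t)
    by (intros s t Hs1 Ht1; apply HD; apply Rabs_def1; lra).
  assert (Near : forall s t, u < s < u + h -> v < t < v + h ->
                   Rabs (s - u) < h /\ Rabs (t - v) < h)
    by (intros s t Hs1 Ht1; split; apply Rabs_def1; lra).
  destruct (mixed_difference f u v h ltac:(lra)) as (s1 & t1 & Hs1 & Ht1 & E1).
  { intros s t Hs1 Ht1. exact (proj1 (smooth_partials D f [] s t Hs (Box s t Hs1 Ht1))). }
  { intros s t Hs1 Ht1. exact (proj2 (smooth_partials D f [true] s t Hs (Box s t Hs1 Ht1))). }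
  destruct (mixed_difference_transposed f u v h ltac:(lra)) as (s2 & t2 & Hs2 & Ht2 & E2).
  { intros s t Hs2 Ht2. exact (proj2 (smooth_partials D f [] s t Hs (Box s t Hs2 Ht2))). }
  { intros s t Hs2 Ht2. exact (proj1 (smooth_partials D f [false] s t Hs (Box s t Hs2 Ht2))). }
  assert (Same : Pv (Pu f) s1 t1 = Pu (Pv f) s2 t2).
  { apply (Rmult_eq_reg_l (h * h)); [congruence | apply Rgt_not_eq, Rmult_lt_0_compat; lra]. }
  destruct (Near s1 t1 Hs1 Ht1), (Near s2 t2 Hs2 Ht2).
  pose proof (Close1 s1 t1 (Box s1 t1 ltac:(lra) ltac:(lra)) ltac:(lra) ltac:(lra)) as C1.
  pose proof (Close2 s2 t2 (Box s2 t2 ltac:(lra) ltac:(lra)) ltac:(lra) ltac:(lra)) as C2.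
  simpl in C1, C2. rewrite Same in C1.
  apply Rabs_def2 in C1. apply Rabs_def2 in C2. apply Rabs_def1; lra.
Qed.

Lemma clairautV D X u v : open2 D -> smoothV D X -> D u v -> PuV (PvV X) u v = PvV (PuV X) u v.
Proof.
  intros Ho (s1 & s2 & s3 & s4) H. unfold PuV, PvV; simpl.
  f_equal; apply (clairaut D); assumption.
Qed.

Lemma dot_comm a b : dot a b = dot b a.
Proof. unfold dot; ring. Qed.
Lemma dot_lin a p b q w : dot (vadd (vscal a p) (vscal b q)) w = a * dot p w + b * dot q w.
Proof. unfold dot, vadd, vscal; simpl; ring. Qed.
Lemma dot_linr a p b q w : dot w (vadd (vscal a p) (vscal b q)) = a * dot w p + b * dot w q.
Proof. unfold dot, vadd, vscal; simpl; ring. Qed.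
Lemma dot_sub a b e : dot (vsub a b) e = dot a e - dot b e.
Proof. unfold dot, vsub; simpl; ring. Qed.

(* Cramer's rule in disguise: a vector orthogonal to the four columns of a
   nonsingular matrix is zero. *)
Lemma orthogonal_to_basis_zero a b c d r :
  dot a r = 0 -> dot b r = 0 -> dot c r = 0 -> dot d r = 0 -> det4 a b c d <> 0 -> r = vzero.
Proof.
  intros Ha Hb Hc Hd Hdet.
  destruct a as [a1 a2 a3 a4], b as [b1 b2 b3 b4], c as [c1 c2 c3 c4],
    d as [d1 d2 d3 d4], r as [r1 r2 r3 r4].
  unfold dot in *; simpl in *. set (K := det4 _ _ _ _) in Hdet.
  assert (E1 : K * r1 = det4 (mkV4 (a1*r1+a2*r2+a3*r3+a4*r4) a2 a3 a4)
     (mkV4 (b1*r1+b2*r2+b3*r3+b4*r4) b2 b3 b4) (mkV4 (c1*r1+c2*r2+c3*r3+c4*r4) c2 c3 c4)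
     (mkV4 (d1*r1+d2*r2+d3*r3+d4*r4) d2 d3 d4)) by (unfold K, det4, det3; simpl; ring).
  assert (E2 : K * r2 = det4 (mkV4 a1 (a1*r1+a2*r2+a3*r3+a4*r4) a3 a4)
     (mkV4 b1 (b1*r1+b2*r2+b3*r3+b4*r4) b3 b4) (mkV4 c1 (c1*r1+c2*r2+c3*r3+c4*r4) c3 c4)
     (mkV4 d1 (d1*r1+d2*r2+d3*r3+d4*r4) d3 d4)) by (unfold K, det4, det3; simpl; ring).
  assert (E3 : K * r3 = det4 (mkV4 a1 a2 (a1*r1+a2*r2+a3*r3+a4*r4) a4)
     (mkV4 b1 b2 (b1*r1+b2*r2+b3*r3+b4*r4) b4) (mkV4 c1 c2 (c1*r1+c2*r2+c3*r3+c4*r4) c4)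
     (mkV4 d1 d2 (d1*r1+d2*r2+d3*r3+d4*r4) d4)) by (unfold K, det4, det3; simpl; ring).
  assert (E4 : K * r4 = det4 (mkV4 a1 a2 a3 (a1*r1+a2*r2+a3*r3+a4*r4))
     (mkV4 b1 b2 b3 (b1*r1+b2*r2+b3*r3+b4*r4)) (mkV4 c1 c2 c3 (c1*r1+c2*r2+c3*r3+c4*r4))
     (mkV4 d1 d2 d3 (d1*r1+d2*r2+d3*r3+d4*r4))) by (unfold K, det4, det3; simpl; ring).
  rewrite Ha, Hb, Hc, Hd in E1, E2, E3, E4.
  unfold det4, det3 in E1, E2, E3, E4; simpl in E1, E2, E3, E4.
  unfold vzero. f_equal; apply (Rmult_eq_reg_l K); lra.
Qed.

Definition orthonormal4 (e1 e2 e3 e4 : V4) : Prop :=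
  dot e1 e1 = 1 /\ dot e2 e2 = 1 /\ dot e3 e3 = 1 /\ dot e4 e4 = 1 /\
  dot e1 e2 = 0 /\ dot e1 e3 = 0 /\ dot e1 e4 = 0 /\ dot e2 e3 = 0 /\
  dot e2 e4 = 0 /\ dot e3 e4 = 0 /\ det4 e1 e2 e3 e4 <> 0.

Lemma frame_expansion e1 e2 e3 e4 w : orthonormal4 e1 e2 e3 e4 ->
  w = vadd (vscal (dot w e1) e1) (vadd (vscal (dot w e2) e2)
       (vadd (vscal (dot w e3) e3) (vscal (dot w e4) e4))).
Proof.
  intros (o1 & o2 & o3 & o4 & o12 & o13 & o14 & o23 & o24 & o34 & Hdet).
  set (r := vsub w (vadd (vscal (dot w e1) e1) (vadd (vscal (dot w e2) e2)
       (vadd (vscal (dot w e3) e3) (vscal (dot w e4) e4))))).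
  assert (Hr : forall e, dot e r = dot e w - dot w e1 * dot e e1 - dot w e2 * dot e e2
                                   - dot w e3 * dot e e3 - dot w e4 * dot e e4)
    by (intros e; unfold r, dot, vsub, vadd, vscal; simpl; ring).
  assert (Hr0 : r = vzero).
  { apply (orthogonal_to_basis_zero e1 e2 e3 e4); auto; rewrite Hr;
      rewrite ?(dot_comm e2 e1), ?(dot_comm e3 e1), ?(dot_comm e4 e1), ?(dot_comm e3 e2),
        ?(dot_comm e4 e2), ?(dot_comm e4 e3), ?(dot_comm w e1), ?(dot_comm w e2),
        ?(dot_comm w e3), ?(dot_comm w e4), ?o1, ?o2, ?o3, ?o4, ?o12, ?o13, ?o14, ?o23,
        ?o24, ?o34; ring. }
  unfold r in Hr0. destruct w, e1, e2, e3, e4. unfold vsub, vadd, vscal, vzero in *; simpl in *.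
  injection Hr0; intros; f_equal; lra.
Qed.

Lemma parseval e1 e2 e3 e4 a b : orthonormal4 e1 e2 e3 e4 ->
  dot a b = dot a e1 * dot b e1 + dot a e2 * dot b e2 + dot a e3 * dot b e3 + dot a e4 * dot b e4.
Proof.
  intros H. rewrite (frame_expansion e1 e2 e3 e4 a H) at 1.
  rewrite (frame_expansion e1 e2 e3 e4 b H) at 1.
  destruct H as (o1 & o2 & o3 & o4 & o12 & o13 & o14 & o23 & o24 & o34 & _).
  set (a1 := dot a e1); set (a2 := dot a e2); set (a3 := dot a e3); set (a4 := dot a e4);
  set (b1 := dot b e1); set (b2 := dot b e2); set (b3 := dot b e3); set (b4 := dot b e4).
  transitivity (a1*b1*dot e1 e1 + a2*b2*dot e2 e2 + a3*b3*dot e3 e3 + a4*b4*dot e4 e4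
     + (a1*b2+a2*b1)*dot e1 e2 + (a1*b3+a3*b1)*dot e1 e3 + (a1*b4+a4*b1)*dot e1 e4
     + (a2*b3+a3*b2)*dot e2 e3 + (a2*b4+a4*b2)*dot e2 e4 + (a3*b4+a4*b3)*dot e3 e4).
  - unfold dot, vadd, vscal; simpl; ring.
  - rewrite o1, o2, o3, o4, o12, o13, o14, o23, o24, o34; ring.
Qed.

(** Pointwise geometry of the surface at (u,v): tangent coordinates, the
    normal projection and the second fundamental form. *)

Lemma tc_span z u v a b : W2 z u v <> 0 ->
  tc1 z u v (vadd (vscal a (zu z u v)) (vscal b (zv z u v))) = a /\
  tc2 z u v (vadd (vscal a (zu z u v)) (vscal b (zv z u v))) = b.
Proof.
  intros H. unfold tc1, tc2, W2, EE, FF, GG in *. rewrite !dot_lin.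
  rewrite (dot_comm (zv z u v) (zu z u v)). split; field; assumption.
Qed.

Lemma tc_zu z u v : W2 z u v <> 0 -> tc1 z u v (zu z u v) = 1 /\ tc2 z u v (zu z u v) = 0.
Proof. intros H. unfold tc1, tc2, W2, EE, FF, GG in *. split; field; assumption. Qed.
Lemma tc_zv z u v : W2 z u v <> 0 -> tc1 z u v (zv z u v) = 0 /\ tc2 z u v (zv z u v) = 1.
Proof.
  intros H. unfold tc1, tc2, W2, EE, FF, GG in *.
  rewrite (dot_comm (zv z u v) (zu z u v)). split; field; assumption.
Qed.

Lemma nrm_normal z u v w : W2 z u v <> 0 ->
  dot (nrm z u v w) (zu z u v) = 0 /\ dot (nrm z u v w) (zv z u v) = 0.
Proof.
  intros H. unfold nrm. rewrite !dot_sub, !dot_lin. unfold tc1, tc2, W2, EE, FF, GG in *.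
  rewrite (dot_comm (zv z u v) (zu z u v)). split; field; assumption.
Qed.

Lemma nrm_dot z u v w e : dot e (zu z u v) = 0 -> dot e (zv z u v) = 0 ->
  dot (nrm z u v w) e = dot w e.
Proof.
  intros H1 H2. unfold nrm. rewrite dot_sub, dot_lin, (dot_comm (zu z u v)), (dot_comm (zv z u v)).
  rewrite H1, H2. ring.
Qed.

Lemma normal_in_frame z u v X Y N1 N2 aX bX aY bY e :
  orthonormal4 X Y N1 N2 ->
  X = vadd (vscal aX (zu z u v)) (vscal bX (zv z u v)) ->
  Y = vadd (vscal aY (zu z u v)) (vscal bY (zv z u v)) ->
  dot e (zu z u v) = 0 -> dot e (zv z u v) = 0 ->
  e = vadd (vscal (dot e N1) N1) (vscal (dot e N2) N2).
Proof.
  intros Ho HX HY H1 H2. rewrite (frame_expansion X Y N1 N2 e Ho) at 1.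
  assert (EX : dot e X = 0) by (rewrite HX, dot_linr, H1, H2; ring).
  assert (EY : dot e Y = 0) by (rewrite HY, dot_linr, H1, H2; ring).
  rewrite EX, EY. destruct X, Y, N1, N2. unfold vadd, vscal; simpl; f_equal; ring.
Qed.

(* The coefficients of the second fundamental form along a unit normal e:
   c_ij = <z_ij, e> (the tangential parts of z_ij drop out). *)
Lemma sff_coefficients z u v e : W2 z u v <> 0 -> dot e (zu z u v) = 0 -> dot e (zv z u v) = 0 ->
  c11 z u v e = dot e (zuu z u v) /\ c12 z u v e = dot e (zuv z u v) /\
  c22 z u v e = dot e (zvv z u v).
Proof.
  intros HW H1 H2. unfold c11, c12, c22, Defs.sigma; cbv zeta.
  destruct (tc_zu z u v HW) as [a1 a2], (tc_zv z u v HW) as [b1 b2].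
  rewrite a1, a2, b1, b2, !(nrm_dot z u v _ e H1 H2).
  repeat split; unfold dot, vadd, vscal; simpl; ring.
Qed.

(** The adapted frame {x, y, n1, n2} and the normal connection. *)

Lemma adapted_frame_at D z x y n1 n2 u v :
  (forall a b, D a b -> 0 < W2 z a b) -> adapted_frame z D x y n1 n2 -> D u v ->
  orthonormal4 (x u v) (y u v) (n1 u v) (n2 u v) /\
  x u v = vadd (vscal (coefA z x u v) (zu z u v)) (vscal (coefB z x u v) (zv z u v)) /\
  y u v = vadd (vscal (coefA z y u v) (zu z u v)) (vscal (coefB z y u v) (zv z u v)) /\
  dot (n1 u v) (zu z u v) = 0 /\ dot (n1 u v) (zv z u v) = 0 /\
  dot (n2 u v) (zu z u v) = 0 /\ dot (n2 u v) (zv z u v) = 0 /\ W2 z u v <> 0.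
Proof.
  intros HW Hf Huv. assert (HW' : W2 z u v <> 0) by (specialize (HW u v Huv); lra).
  destruct (Hf u v Huv) as (ox & oy & on1 & on2 & oxy & oxn1 & oxn2 & oyn1 & oyn2 & on12 &
    [ax [bx Hxs]] & [ay [by' Hys]] & p11 & p12 & p21 & p22 & Hdet).
  unfold coefA, coefB. rewrite Hxs, Hys.
  destruct (tc_span z u v ax bx HW') as [t1 t2], (tc_span z u v ay by' HW') as [t3 t4].
  rewrite t1, t2, t3, t4, <- Hxs, <- Hys.
  repeat split; auto. lra.
Qed.

Lemma adapted_frame_normals D z x y n1 n2 : adapted_frame z D x y n1 n2 ->
  (forall a b, D a b -> dot (n1 a b) (n1 a b) = 1) /\
  (forall a b, D a b -> dot (n2 a b) (n2 a b) = 1) /\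
  (forall a b, D a b -> dot (n1 a b) (zu z a b) = 0) /\
  (forall a b, D a b -> dot (n1 a b) (zv z a b) = 0) /\
  (forall a b, D a b -> dot (n2 a b) (zu z a b) = 0) /\
  (forall a b, D a b -> dot (n2 a b) (zv z a b) = 0).
Proof. intros Hf. repeat split; intros a b H; apply (Hf a b H). Qed.

Lemma coef_partials z X u v : exUV (zu z) u v -> exUV (zv z) u v -> exUV X u v ->
  exVV (zu z) u v -> exVV (zv z) u v -> exVV X u v -> W2 z u v <> 0 ->
  exU (coefA z X) u v /\ exU (coefB z X) u v /\ exV (coefA z X) u v /\ exV (coefB z X) u v.
Proof.
  intros a1 a2 a3 b1 b2 b3 HW. unfold coefA, coefB, tc1, tc2, W2, EE, FF, GG in *.
  repeat split;
  repeat first [ apply exU_div | apply exU_minus | apply exU_mult | apply exU_pow2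
               | apply exU_dot | apply exV_div | apply exV_minus | apply exV_mult
               | apply exV_pow2 | apply exV_dot | apply exU_const | apply exV_const
               | assumption ].
Qed.

(** The normal connection form omega(Y) = <D_Y n2, n1>, written with the
    coordinate functions p = <(n2)_u, n1> and q = <(n2)_v, n1>. *)
Definition conn_u (n1 n2 : field) : R -> R -> R := fun a b => dot (PuV n2 a b) (n1 a b).
Definition conn_v (n1 n2 : field) : R -> R -> R := fun a b => dot (PvV n2 a b) (n1 a b).
Definition omega z (Y n1 n2 : field) : R -> R -> R := fun a b =>
  coefA z Y a b * conn_u n1 n2 a b + coefB z Y a b * conn_v n1 n2 a b.

Lemma dot_Dn_n1 z Z n1 n2 u v : dot (n1 u v) (zu z u v) = 0 -> dot (n1 u v) (zv z u v) = 0 ->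
  dot (Dn z Z n2 u v) (n1 u v) = omega z Z n1 n2 u v.
Proof. intros H1 H2. unfold Dn. rewrite (nrm_dot z u v _ _ H1 H2). apply dot_lin. Qed.

(* Since the normal bundle has rank two and n2 has unit length,
   D_Y n2 = omega(Y) n1 on the whole domain. *)
Lemma Dn_n2 D z x y n1 n2 Y u v : open2 D ->
  (forall a b, D a b -> 0 < W2 z a b) -> adapted_frame z D x y n1 n2 -> smoothV D n2 ->
  D u v -> Dn z Y n2 u v = vscal (omega z Y n1 n2 u v) (n1 u v).
Proof.
  intros Ho HW Hf Hs Huv.
  destruct (adapted_frame_at D z x y n1 n2 u v HW Hf Huv)
    as (Ho4 & HX & HY & p1 & p2 & p3 & p4 & HW').
  destruct (adapted_frame_normals D z x y n1 n2 Hf) as (_ & Hu & _).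
  destruct (unit_field_deriv D n2 u v Ho Hs Huv Hu) as [d1 d2].
  destruct (nrm_normal z u v (nabla' z Y n2 u v) HW') as [q1 q2].
  fold (Dn z Y n2 u v) in q1, q2.
  assert (Tangential : dot (Dn z Y n2 u v) (n2 u v) = 0).
  { unfold Dn, nabla'. rewrite (nrm_dot z u v _ _ p3 p4), dot_lin, d1, d2. ring. }
  rewrite (normal_in_frame z u v _ _ _ _ _ _ _ _ _ Ho4 HX HY q1 q2).
  rewrite (dot_Dn_n1 z Y n1 n2 u v p1 p2), Tangential.
  destruct (n1 u v), (n2 u v). unfold vadd, vscal; simpl; f_equal; ring.
Qed.

Lemma omega_partials D z Y n1 n2 u v : smoothV D z -> smoothV D Y -> smoothV D n1 ->
  smoothV D n2 -> D u v -> W2 z u v <> 0 ->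
  exU (omega z Y n1 n2) u v /\ exV (omega z Y n1 n2) u v.
Proof.
  intros Hz HY Hn1 Hn2 Huv HW.
  destruct (smoothV_partials D z u v Hz Huv) as (_ & _ & z1 & z2 & z3 & z4).
  destruct (smoothV_partials D Y u v HY Huv) as (y1 & y2 & _).
  destruct (smoothV_partials D n1 u v Hn1 Huv) as (m1 & m2 & _).
  destruct (smoothV_partials D n2 u v Hn2 Huv) as (_ & _ & k1 & k2 & k3 & k4).
  destruct (coef_partials z Y u v z1 z3 y1 z2 z4 y2 HW) as (c1 & c2 & c3 & c4).
  unfold omega, conn_u, conn_v. split.
  - apply exU_plus; apply exU_mult; auto; apply exU_dot; auto.
  - apply exV_plus; apply exV_mult; auto; apply exV_dot; auto.
Qed.

(* Second covariant derivative: <D_X D_Y n2, n1> = X(omega(Y)), because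
   D_Y n2 = omega(Y) n1 and n1 has unit length. *)
Lemma dot_DnDn_n1 D z x y n1 n2 X Y u v : open2 D -> smoothV D z ->
  (forall a b, D a b -> 0 < W2 z a b) -> adapted_frame z D x y n1 n2 ->
  smoothV D n1 -> smoothV D n2 -> smoothV D Y -> D u v ->
  dot (Dn z X (Dn z Y n2) u v) (n1 u v) = derivF z X (omega z Y n1 n2) u v.
Proof.
  intros Ho Hz HW Hf Hn1 Hn2 HY Huv.
  destruct (adapted_frame_at D z x y n1 n2 u v HW Hf Huv) as (_ & _ & _ & p1 & p2 & _ & _ & HW').
  destruct (adapted_frame_normals D z x y n1 n2 Hf) as (Hu & _).
  destruct (unit_field_deriv D n1 u v Ho Hn1 Huv Hu) as [d1 d2].
  destruct (open2_lines D u v Ho Huv) as (r & Hr & Lu & Lv).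
  destruct (smoothV_partials D n1 u v Hn1 Huv) as (m1 & m2 & _).
  destruct (omega_partials D z Y n1 n2 u v Hz HY Hn1 Hn2 Huv HW') as [wu wv].
  unfold Dn at 1, nabla'. rewrite (nrm_dot z u v _ _ p1 p2), dot_lin.
  rewrite (PuV_scal_local (Dn z Y n2) (omega z Y n1 n2) n1 u v r Hr), dot_lin; auto.
  2: intros t Ht; exact (Dn_n2 D z x y n1 n2 Y t v Ho HW Hf Hn2 (Lu t Ht)).
  rewrite (PvV_scal_local (Dn z Y n2) (omega z Y n1 n2) n1 u v r Hr), dot_lin; auto.
  2: intros t Ht; exact (Dn_n2 D z x y n1 n2 Y u t Ho HW Hf Hn2 (Lv t Ht)).
  rewrite d1, d2, (Hu u v Huv). unfold derivF. ring.
Qed.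

(* Cartan's formula for the 1-form omega = p du + q dv:
   X omega(Y) - Y omega(X) - omega([X,Y]) = (du ^ dv)(X,Y) (q_u - p_v). *)
Lemma cartan_formula aX bX aY bY p q u v :
  exU aX u v -> exU bX u v -> exU aY u v -> exU bY u v -> exU p u v -> exU q u v ->
  exV aX u v -> exV bX u v -> exV aY u v -> exV bY u v -> exV p u v -> exV q u v ->
  let om a b := fun s t => a s t * p s t + b s t * q s t in
  let der a b f := a u v * Pu f u v + b u v * Pv f u v in
  der aX bX (om aY bY) - der aY bY (om aX bX)
    - ((der aX bX aY - der aY bY aX) * p u v + (der aX bX bY - der aY bY bX) * q u v)
  = (aX u v * bY u v - bX u v * aY u v) * (Pu q u v - Pv p u v).
Proof.
  intros; subst om der; cbv beta.
  rewrite !Pu_plus, !Pv_plus, !Pu_mult, !Pv_mult by auto using exU_mult, exV_mult.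
  ring.
Qed.

Lemma normal_curvature_coords D z x y n1 n2 u v : open2 D -> smoothV D z ->
  (forall a b, D a b -> 0 < W2 z a b) -> smoothV D x -> smoothV D y ->
  smoothV D n1 -> smoothV D n2 -> adapted_frame z D x y n1 n2 -> D u v ->
  dot (Rperp z x y n2 u v) (n1 u v) =
  (coefA z x u v * coefB z y u v - coefB z x u v * coefA z y u v) *
  (Pu (conn_v n1 n2) u v - Pv (conn_u n1 n2) u v).
Proof.
  intros Ho Hz HW Hx Hy Hn1 Hn2 Hf Huv.
  destruct (adapted_frame_at D z x y n1 n2 u v HW Hf Huv) as (_ & _ & _ & p1 & p2 & _ & _ & HW').
  destruct (smoothV_partials D z u v Hz Huv) as (_ & _ & z1 & z2 & z3 & z4).
  destruct (smoothV_partials D x u v Hx Huv) as (x1 & x2 & _).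
  destruct (smoothV_partials D y u v Hy Huv) as (y1 & y2 & _).
  destruct (smoothV_partials D n1 u v Hn1 Huv) as (m1 & m2 & _).
  destruct (smoothV_partials D n2 u v Hn2 Huv) as (_ & _ & k1 & k2 & k3 & k4).
  destruct (coef_partials z x u v z1 z3 x1 z2 z4 x2 HW') as (cx1 & cx2 & cx3 & cx4).
  destruct (coef_partials z y u v z1 z3 y1 z2 z4 y2 HW') as (cy1 & cy2 & cy3 & cy4).
  unfold Rperp. rewrite !dot_sub.
  rewrite (dot_DnDn_n1 D z x y n1 n2 x y u v), (dot_DnDn_n1 D z x y n1 n2 y x u v) by assumption.
  rewrite (dot_Dn_n1 z _ n1 n2 u v p1 p2).
  change (omega z (bracket z x y) n1 n2 u v) with
    (tc1 z u v (bracket z x y u v) * conn_u n1 n2 u v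
     + tc2 z u v (bracket z x y u v) * conn_v n1 n2 u v).
  unfold bracket.
  destruct (tc_span z u v (derivF z x (coefA z y) u v - derivF z y (coefA z x) u v)
              (derivF z x (coefB z y) u v - derivF z y (coefB z x) u v) HW') as [t1 t2].
  rewrite t1, t2.
  exact (cartan_formula (coefA z x) (coefB z x) (coefA z y) (coefB z y)
           (conn_u n1 n2) (conn_v n1 n2) u v cx1 cx2 cy1 cy2
           (exU_dot _ _ u v k1 m1) (exU_dot _ _ u v k3 m1) cx3 cx4 cy3 cy4
           (exV_dot _ _ u v k2 m2) (exV_dot _ _ u v k4 m2)).
Qed.

(* q_u - p_v = <(n2)_v, (n1)_u> - <(n2)_u, (n1)_v>, by symmetry of (n2)_uv. *)
Lemma conn_curl D n1 n2 u v : open2 D -> smoothV D n1 -> smoothV D n2 -> D u v ->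
  Pu (conn_v n1 n2) u v - Pv (conn_u n1 n2) u v =
  dot (PvV n2 u v) (PuV n1 u v) - dot (PuV n2 u v) (PvV n1 u v).
Proof.
  intros Ho Hn1 Hn2 Huv.
  destruct (smoothV_partials D n1 u v Hn1 Huv) as (m1 & m2 & _).
  destruct (smoothV_partials D n2 u v Hn2 Huv) as (_ & _ & _ & k2 & k3 & _).
  unfold conn_u, conn_v. rewrite (Pu_dot (PvV n2) n1 u v k3 m1), (Pv_dot (PuV n2) n1 u v k2 m2).
  rewrite (clairautV D n2 u v Ho Hn2 Huv). ring.
Qed.

(* Pointwise algebra: expanding <(n2)_v, (n1)_u> - <(n2)_u, (n1)_v> in the
   frame {X, Y, N1, N2} and using the Weingarten relations
   <(n_k)_i, z_j> = -<n_k, z_ij> together with <(n_k)_i, n_k> = 0. *)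
Lemma weingarten_expansion (ZU ZV ZUU ZUV ZVV X Y N1 N2 N1u N1v N2u N2v : V4) aX bX aY bY :
  orthonormal4 X Y N1 N2 ->
  X = vadd (vscal aX ZU) (vscal bX ZV) -> Y = vadd (vscal aY ZU) (vscal bY ZV) ->
  dot N1u N1 = 0 -> dot N1v N1 = 0 -> dot N2u N2 = 0 -> dot N2v N2 = 0 ->
  dot N1u ZU = - dot N1 ZUU -> dot N1u ZV = - dot N1 ZUV ->
  dot N1v ZU = - dot N1 ZUV -> dot N1v ZV = - dot N1 ZVV ->
  dot N2u ZU = - dot N2 ZUU -> dot N2u ZV = - dot N2 ZUV ->
  dot N2v ZU = - dot N2 ZUV -> dot N2v ZV = - dot N2 ZVV ->
  dot N2v N1u - dot N2u N1v =
    (aX * aX + aY * aY) * (dot N1 ZUU * dot N2 ZUV - dot N1 ZUV * dot N2 ZUU)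
  + (aX * bX + aY * bY) * (dot N1 ZUU * dot N2 ZVV - dot N1 ZVV * dot N2 ZUU)
  + (bX * bX + bY * bY) * (dot N1 ZUV * dot N2 ZVV - dot N1 ZVV * dot N2 ZUV).
Proof.
  intros Ho HX HY a1 a2 a3 a4 b1 b2 b3 b4 c1 c2 c3 c4.
  rewrite (parseval X Y N1 N2 N2v N1u Ho), (parseval X Y N1 N2 N2u N1v Ho).
  rewrite HX, HY, !dot_linr, a1, a2, a3, a4, b1, b2, b3, b4, c1, c2, c3, c4. ring.
Qed.

Lemma weingarten D z n u v : open2 D -> smoothV D z -> smoothV D n -> D u v ->
  (forall a b, D a b -> dot (n a b) (zu z a b) = 0) ->
  (forall a b, D a b -> dot (n a b) (zv z a b) = 0) ->
  dot (PuV n u v) (zu z u v) = - dot (n u v) (zuu z u v) /\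
  dot (PuV n u v) (zv z u v) = - dot (n u v) (zuv z u v) /\
  dot (PvV n u v) (zu z u v) = - dot (n u v) (zuv z u v) /\
  dot (PvV n u v) (zv z u v) = - dot (n u v) (zvv z u v).
Proof.
  intros Ho Hz Hn Huv Hnu Hnv.
  destruct (smoothV_partials D z u v Hz Huv) as (_ & _ & z1 & z2 & z3 & z4).
  destruct (smoothV_partials D n u v Hn Huv) as (m1 & m2 & _).
  destruct (dot_const_deriv D n (zu z) 0 u v Ho Huv Hnu m1 z1 m2 z2) as [q1 q2].
  destruct (dot_const_deriv D n (zv z) 0 u v Ho Huv Hnv m1 z3 m2 z4) as [q3 q4].
  assert (Czuv : PuV (zv z) u v = zuv z u v) by exact (clairautV D z u v Ho Hz Huv).
  change (PuV (zu z) u v) with (zuu z u v) in q1.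
  change (PvV (zu z) u v) with (zuv z u v) in q2.
  change (PvV (zv z) u v) with (zvv z u v) in q4.
  rewrite Czuv in q3.
  repeat split; lra.
Qed.

Lemma normal_curvature_sff D z x y n1 n2 u v : open2 D -> smoothV D z ->
  (forall a b, D a b -> 0 < W2 z a b) -> smoothV D x -> smoothV D y ->
  smoothV D n1 -> smoothV D n2 -> adapted_frame z D x y n1 n2 -> D u v ->
  let aX := coefA z x u v in let bX := coefB z x u v in
  let aY := coefA z y u v in let bY := coefB z y u v in
  let h1 := fun w => dot (n1 u v) w in let h2 := fun w => dot (n2 u v) w in
  dot (Rperp z x y n2 u v) (n1 u v) = (aX * bY - bX * aY) *
    ((aX * aX + aY * aY) * (h1 (zuu z u v) * h2 (zuv z u v) - h1 (zuv z u v) * h2 (zuu z u v))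
   + (aX * bX + aY * bY) * (h1 (zuu z u v) * h2 (zvv z u v) - h1 (zvv z u v) * h2 (zuu z u v))
   + (bX * bX + bY * bY) * (h1 (zuv z u v) * h2 (zvv z u v) - h1 (zvv z u v) * h2 (zuv z u v))).
Proof.
  intros Ho Hz HW Hx Hy Hn1 Hn2 Hf Huv. cbv zeta.
  rewrite (normal_curvature_coords D z x y n1 n2 u v), (conn_curl D n1 n2 u v) by assumption.
  destruct (adapted_frame_at D z x y n1 n2 u v HW Hf Huv) as (Ho4 & HX & HY & _).
  destruct (adapted_frame_normals D z x y n1 n2 Hf) as (U1 & U2 & P1u & P1v & P2u & P2v).
  destruct (unit_field_deriv D n1 u v Ho Hn1 Huv U1) as [d1u d1v].
  destruct (unit_field_deriv D n2 u v Ho Hn2 Huv U2) as [d2u d2v].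
  destruct (weingarten D z n1 u v Ho Hz Hn1 Huv P1u P1v) as (w1 & w2 & w3 & w4).
  destruct (weingarten D z n2 u v Ho Hz Hn2 Huv P2u P2v) as (w5 & w6 & w7 & w8).
  rewrite (weingarten_expansion _ _ _ _ _ _ _ _ _ _ _ _ _ _ _ _ _ Ho4 HX HY
             d1u d1v d2u d2v w1 w2 w3 w4 w5 w6 w7 w8).
  reflexivity.
Qed.

(** The invariant varkappa and the comparison of the two sides. *)

Lemma det4_change12 p q r s a b c d :
  det4 (vadd (vscal a p) (vscal b q)) (vadd (vscal c p) (vscal d q)) r s =
  (a * d - b * c) * det4 p q r s.
Proof. unfold det4, det3, vadd, vscal; simpl; ring. Qed.
Lemma det4_change34 p q r s a b c d :
  det4 p q (vadd (vscal a r) (vscal b s)) (vadd (vscal c r) (vscal d s)) =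
  (a * d - b * c) * det4 p q r s.
Proof. unfold det4, det3, vadd, vscal; simpl; ring. Qed.

Lemma normal_frame_rotation z u v X Y N1 N2 aX bX aY bY e1 e2 :
  orthonormal4 X Y N1 N2 ->
  X = vadd (vscal aX (zu z u v)) (vscal bX (zv z u v)) ->
  Y = vadd (vscal aY (zu z u v)) (vscal bY (zv z u v)) ->
  pos_normal_frame z u v e1 e2 ->
  exists al be ga de,
    e1 = vadd (vscal al N1) (vscal be N2) /\ e2 = vadd (vscal ga N1) (vscal de N2) /\
    (al * de - be * ga) * (al * de - be * ga) = 1 /\
    0 < (al * de - be * ga) * det4 (zu z u v) (zv z u v) N1 N2.
Proof.
  intros Ho HX HY (o1 & o2 & o12 & a1 & a2 & b1 & b2 & Hdet).
  pose proof (normal_in_frame z u v X Y N1 N2 aX bX aY bY e1 Ho HX HY a1 a2) as E1.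
  pose proof (normal_in_frame z u v X Y N1 N2 aX bX aY bY e2 Ho HX HY b1 b2) as E2.
  destruct Ho as (_ & _ & n1 & n2 & _ & _ & _ & _ & _ & n12 & _).
  exists (dot e1 N1), (dot e1 N2), (dot e2 N1), (dot e2 N2).
  split; [exact E1|]. split; [exact E2|]. split.
  - rewrite E1 in o1, o12. rewrite E2 in o2, o12.
    rewrite !dot_lin, !dot_linr, (dot_comm N2 N1), n1, n2, n12 in o1, o2, o12.
    nra.
  - rewrite <- det4_change34, <- E1, <- E2. exact Hdet.
Qed.

Lemma varkappa_sff z u v N1 N2 al be ga de e1 e2 : W2 z u v <> 0 ->
  dot N1 (zu z u v) = 0 -> dot N1 (zv z u v) = 0 ->
  dot N2 (zu z u v) = 0 -> dot N2 (zv z u v) = 0 ->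
  e1 = vadd (vscal al N1) (vscal be N2) -> e2 = vadd (vscal ga N1) (vscal de N2) ->
  let h1 := fun w => dot N1 w in let h2 := fun w => dot N2 w in
  let S1 := h1 (zuu z u v) * h2 (zuv z u v) - h1 (zuv z u v) * h2 (zuu z u v) in
  let S2 := h1 (zuu z u v) * h2 (zvv z u v) - h1 (zvv z u v) * h2 (zuu z u v) in
  let S3 := h1 (zuv z u v) * h2 (zvv z u v) - h1 (zvv z u v) * h2 (zuv z u v) in
  varkappa z u v e1 e2 = (al * de - be * ga) *
    ((EE z u v * (2 * S3 / WW z u v) + GG z u v * (2 * S1 / WW z u v)
      - 2 * FF z u v * (S2 / WW z u v)) / (2 * W2 z u v)).
Proof.
  intros HW p1 p2 p3 p4 E1 E2. cbv zeta.
  assert (e1u : dot e1 (zu z u v) = 0) by (rewrite E1, dot_lin, p1, p3; ring).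
  assert (e1v : dot e1 (zv z u v) = 0) by (rewrite E1, dot_lin, p2, p4; ring).
  assert (e2u : dot e2 (zu z u v) = 0) by (rewrite E2, dot_lin, p1, p3; ring).
  assert (e2v : dot e2 (zv z u v) = 0) by (rewrite E2, dot_lin, p2, p4; ring).
  destruct (sff_coefficients z u v e1 HW e1u e1v) as (s1 & s2 & s3).
  destruct (sff_coefficients z u v e2 HW e2u e2v) as (s4 & s5 & s6).
  unfold varkappa, LL, MM, NN, Delta1, Delta2, Delta3.
  rewrite s1, s2, s3, s4, s5, s6, E1, E2, !dot_lin. unfold Rdiv. ring.
Qed.

(* Inverting the Gram system: for an orthonormal tangent pair
   X = aX z_u + bX z_v, Y = aY z_u + bY z_v, with d = aX bY - bX aY. *)
Lemma gram_inverse E F G aX bX aY bY :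
  E * aX * aX + F * (aX * bX + bX * aX) + G * bX * bX = 1 ->
  E * aY * aY + F * (aY * bY + bY * aY) + G * bY * bY = 1 ->
  E * aX * aY + F * (aX * bY + bX * aY) + G * bX * bY = 0 ->
  let d := aX * bY - bX * aY in
  aX * aX + aY * aY = d * d * G /\ aX * bX + aY * bY = - (d * d * F) /\
  bX * bX + bY * bY = d * d * E /\ d * d * (E * G - F ^ 2) = 1.
Proof.
  intros oX oY oXY d.
  set (mX := E * aX * aX + F * (aX * bX + bX * aX) + G * bX * bX) in *.
  set (mY := E * aY * aY + F * (aY * bY + bY * aY) + G * bY * bY) in *.
  set (mXY := E * aX * aY + F * (aX * bY + bX * aY) + G * bX * bY) in *.
  repeat split.
  - transitivity (aX * aX * mY - 2 * aX * aY * mXY + aY * aY * mX);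
      [rewrite oX, oY, oXY; ring | unfold d, mX, mY, mXY; ring].
  - transitivity (aX * bX * mY - (aX * bY + bX * aY) * mXY + aY * bY * mX);
      [rewrite oX, oY, oXY; ring | unfold d, mX, mY, mXY; ring].
  - transitivity (bX * bX * mY - 2 * bX * bY * mXY + bY * bY * mX);
      [rewrite oX, oY, oXY; ring | unfold d, mX, mY, mXY; ring].
  - transitivity (mX * mY - mXY * mXY); [unfold d, mX, mY, mXY; ring | rewrite oX, oY, oXY; ring].
Qed.

Lemma tangent_gram z u v a b c d :
  dot (vadd (vscal a (zu z u v)) (vscal b (zv z u v)))
      (vadd (vscal c (zu z u v)) (vscal d (zv z u v)))
  = EE z u v * a * c + FF z u v * (a * d + b * c) + GG z u v * b * d.
Proof. unfold EE, FF, GG, dot, vadd, vscal; simpl; ring. Qed.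

Lemma orientation_factor d rho W2 : 0 < W2 -> d * d * W2 = 1 -> rho * rho = 1 ->
  0 < d * rho -> d * sqrt W2 = rho.
Proof.
  intros HW Hd Hr Hdr.
  assert (Hs : sqrt W2 * sqrt W2 = W2) by (apply sqrt_sqrt; lra).
  assert (Hsp : 0 < sqrt W2) by (apply sqrt_lt_R0; exact HW).
  assert (Sq : (d * sqrt W2) * (d * sqrt W2) = rho * rho).
  { transitivity (d * d * (sqrt W2 * sqrt W2)); [ring | rewrite Hs, Hd, Hr; reflexivity]. }
  assert (Hpos : 0 < (d * sqrt W2) * rho).
  { replace ((d * sqrt W2) * rho) with ((d * rho) * sqrt W2) by ring.
    apply Rmult_lt_0_compat; assumption. }
  set (a := d * sqrt W2) in *.
  assert (Hf : (a - rho) * (a + rho) = 0) by (transitivity (a * a - rho * rho); [ring | lra]).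
  destruct (Rmult_integral _ _ Hf) as [Hm | Hp]; [lra|].
  replace a with (- rho) in Hpos by lra. lra.
Qed.

Lemma same_sign a b K : 0 < a * K -> 0 < b * K -> 0 < a * b.
Proof.
  intros Ha Hb. assert (0 < (a * K) * (b * K)) by (apply Rmult_lt_0_compat; assumption).
  nra.
Qed.

Lemma varkappa_identity E F G aX bX aY bY rho S1 S2 S3 :
  0 < E * G - F ^ 2 ->
  E * aX * aX + F * (aX * bX + bX * aX) + G * bX * bX = 1 ->
  E * aY * aY + F * (aY * bY + bY * aY) + G * bY * bY = 1 ->
  E * aX * aY + F * (aX * bY + bX * aY) + G * bX * bY = 0 ->
  rho * rho = 1 -> 0 < (aX * bY - bX * aY) * rho ->
  let W := sqrt (E * G - F ^ 2) in
  rho * ((E * (2 * S3 / W) + G * (2 * S1 / W) - 2 * F * (S2 / W)) / (2 * (E * G - F ^ 2))) =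
  (aX * bY - bX * aY) *
    ((aX * aX + aY * aY) * S1 + (aX * bX + aY * bY) * S2 + (bX * bX + bY * bY) * S3).
Proof.
  intros HW oX oY oXY Hr Hdr W.
  destruct (gram_inverse E F G aX bX aY bY oX oY oXY) as (P1 & P2 & P3 & Hd). cbv zeta in *.
  set (d := aX * bY - bX * aY) in *.
  pose proof (orientation_factor d rho _ HW Hd Hr Hdr) as HdW. fold W in HdW.
  assert (HWp : 0 < W) by (apply sqrt_lt_R0; exact HW).
  assert (HW2 : E * G - F ^ 2 <> 0) by lra.
  rewrite P1, P2, P3, <- HdW.
  transitivity (d * (E * S3 + G * S1 - F * S2) * (d * d * (E * G - F ^ 2)) / (E * G - F ^ 2)).
  - rewrite Hd. field. split; lra.
  - field. exact HW2.
Qed.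

Theorem proposition3p4
  (D : R -> R -> Prop) (z x y n1 n2 : field) :
  open2 D ->
  smoothV D z ->
  (forall u v, D u v -> 0 < W2 z u v) ->
  smoothV D x -> smoothV D y -> smoothV D n1 -> smoothV D n2 ->
  adapted_frame z D x y n1 n2 ->
  minimal_wrt z D x y ->
  forall u v, D u v ->
  forall e1 e2 : V4, pos_normal_frame z u v e1 e2 ->
    varkappa z u v e1 e2 = dot (Rperp z x y n2 u v) (n1 u v).
Proof.
  intros Ho Hz HW Hx Hy Hn1 Hn2 Hf _ u v Huv e1 e2 He.
  destruct (adapted_frame_at D z x y n1 n2 u v HW Hf Huv)
    as (Ho4 & HX & HY & p1 & p2 & p3 & p4 & HW').
  destruct (normal_frame_rotation z u v _ _ _ _ _ _ _ _ e1 e2 Ho4 HX HY He)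
    as (al & be & ga & de & E1 & E2 & Hrho & HrhoK).
  (* Express both sides through h^k_ij = <n_k, z_ij>. *)
  rewrite (varkappa_sff z u v (n1 u v) (n2 u v) al be ga de e1 e2 HW' p1 p2 p3 p4 E1 E2).
  rewrite (normal_curvature_sff D z x y n1 n2 u v) by assumption.
  assert (Hxy : 0 < (coefA z x u v * coefB z y u v - coefB z x u v * coefA z y u v) *
                    det4 (zu z u v) (zv z u v) (n1 u v) (n2 u v)).
  { rewrite <- det4_change12, <- HX, <- HY. apply (Hf u v Huv). }
  destruct Ho4 as (ox & oy & _ & _ & oxy & _).
  rewrite HX, tangent_gram in ox. rewrite HY, tangent_gram in oy.
  rewrite HX, HY, tangent_gram in oxy.
  apply varkappa_identity; [exact (HW u v Huv) | auto.. | exact (same_sign _ _ _ Hxy HrhoK)].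
Qed.
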